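(* Let $f:\mathbb{R}^\ell\times\mathbb{R}^m\to\mathbb{R}^\ell$ be $C^1$, let $\Lambda$ be a parameter shift with limits $\lambda_\pm$, and let $X$ define a stable path with endpoints $X_\pm$. For $r>0$ let $\{x_n^r\}_{n\in\mathbb{Z}}$ be the unique solution of $x_{n+1}=f(x_n,\Lambda(rn))$ with $\lim_{n\to-\infty}x_n^r=X_-$. Let $Z_1=f(X_-,\Lambda(0))$ and $Z_2=f(Z_1,\lambda_+)$. If $Z_2\in\mathbb{B}(Y_+,\lambda_+)$ for some attracting fixed point $Y_+$ of $f(\cdot,\lambda_+)$, then there exists $r_1>0$ such that for all $r>r_1$, $x_n^r\to Y_+$ as $n\to\infty$.
   Context: A parameter shift is a $C^1$ function $\Lambda:\mathbb{R}\to\mathbb{R}^m$ with $\lim_{s\to\pm\infty}\Lambda(s)=\lambda_\pm$ and $\lim_{s\to\pm\infty}\Lambda'(s)=0$. A stable path is given by $X:\mathbb{R}\to\mathbb{R}^\ell$ such that: $X(s)$ is a fixed point of $f(\cdot,\Lambda(s))$ for every $s$; $\{(s,X(s))\}$ is a connected curve; the limits $X_\pm=\lim_{s\to\pm\infty}X(s)$ exist and are fixed points of $f(\cdot,\lambda_\pm)$; and the spectral radius of $D_xf(X(s),\Lambda(s))$ is $<1$ for all $s\in\mathbb{R}\cup\{\pm\infty\}$ (with $X(\pm\infty)=X_\pm$, $\Lambda(\pm\infty)=\lambda_\pm$). It is known that for each $r>0$ there is a unique solution with $x_n^r\to X_-$ as $n\to-\infty$. For a fixed point $p$ of $f(\cdot,\lambda)$,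 the basin of attraction $\mathbb{B}(p,\lambda)$ is the set of $x\in\mathbb{R}^\ell$ whose iterates under $f(\cdot,\lambda)$ converge to $p$. *)

From HB Require Import structures.
From mathcomp Require Import all_boot all_order all_algebra.
From mathcomp Require Import all_classical all_reals all_analysis.
From mathcomp Require Import complex.
Set Implicit Arguments. Unset Strict Implicit. Unset Printing Implicit Defensive.
Import Order.TTheory GRing.Theory Num.Theory.
Import numFieldNormedType.Exports.
Local Open Scope classical_set_scope.
Local Open Scope ring_scope.

Definition uncurry_f (R : realType) (l m : nat)
  (f : 'rV[R]_l -> 'rV[R]_m -> 'rV[R]_l) : 'rV[R]_(l + m) -> 'rV[R]_l :=
  fun z => f (lsubmx z) (rsubmx z).

Definition C1_map (R : realType) (l m : nat)
  (f : 'rV[R]_l -> 'rV[R]_m -> 'rV[R]_l) : Prop :=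
  (forall z, differentiable (uncurry_f f) z) /\
  continuous (fun z => jacobian (uncurry_f f) z).

Definition Dxf (R : realType) (l m : nat)
  (f : 'rV[R]_l -> 'rV[R]_m -> 'rV[R]_l) (x : 'rV[R]_l) (lam : 'rV[R]_m)
  : 'M[R]_l := jacobian (fun y => f y lam) x.

Definition eigenvalueC (R : realType) (n : nat) (A : 'M[R]_n) (z : complex R) : Prop :=
  root (map_poly (fun a : R => (a%:C)%C) (char_poly A)) z.

Definition spectral_radius_lt1 (R : realType) (n : nat) (A : 'M[R]_n) : Prop :=
  forall z : complex R, eigenvalueC A z -> `|z| < 1.

Definition parameter_shift (R : realType) (m : nat) (Lam : R -> 'rV[R]_m)
  (lam_m lam_p : 'rV[R]_m) : Prop :=
  (forall s, derivable Lam s 1) /\ continuous (fun s => 'D_1 Lam s) /\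
  (Lam s @[s --> -oo] --> lam_m) /\ (Lam s @[s --> +oo] --> lam_p) /\
  ('D_1 Lam s @[s --> -oo] --> (0 : 'rV[R]_m)) /\
  ('D_1 Lam s @[s --> +oo] --> (0 : 'rV[R]_m)).

Definition stable_path (R : realType) (l m : nat)
  (f : 'rV[R]_l -> 'rV[R]_m -> 'rV[R]_l) (Lam : R -> 'rV[R]_m)
  (lam_m lam_p : 'rV[R]_m) (X : R -> 'rV[R]_l) (X_m X_p : 'rV[R]_l) : Prop :=
  (forall s, f (X s) (Lam s) = X s) /\
  connected [set p : R * 'rV[R]_l | p.2 = X p.1] /\
  (X s @[s --> -oo] --> X_m) /\ (X s @[s --> +oo] --> X_p) /\
  f X_m lam_m = X_m /\ f X_p lam_p = X_p /\
  (forall s, spectral_radius_lt1 (Dxf f (X s) (Lam s))) /\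
  spectral_radius_lt1 (Dxf f X_m lam_m) /\
  spectral_radius_lt1 (Dxf f X_p lam_p).

Definition basin (R : realType) (l m : nat)
  (f : 'rV[R]_l -> 'rV[R]_m -> 'rV[R]_l) (p : 'rV[R]_l) (lam : 'rV[R]_m)
  : set 'rV[R]_l :=
  [set x | (fun k : nat => iter k (fun y => f y lam) x) @ \oo --> p].

Definition attracting_fixed_point (R : realType) (l m : nat)
  (f : 'rV[R]_l -> 'rV[R]_m -> 'rV[R]_l) (p : 'rV[R]_l) (lam : 'rV[R]_m) : Prop :=
  f p lam = p /\ spectral_radius_lt1 (Dxf f p lam).

Definition pullback_solution (R : realType) (l m : nat)
  (f : 'rV[R]_l -> 'rV[R]_m -> 'rV[R]_l) (Lam : R -> 'rV[R]_m) (r : R)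
  (X_m : 'rV[R]_l) (x : int -> 'rV[R]_l) : Prop :=
  (forall n : int, x (n + 1)%R = f (x n) (Lam (r * n%:~R))) /\
  ((fun k : nat => x (- (k%:Z))%R) @ \oo --> X_m).

(* If A = D_x f(p, lam) has spectral radius < 1, then A^k -> 0: by Cayley-Hamilton
   over C, the product of the A - z over the eigenvalues z vanishes, and peeling off
   one factor at a time reduces this to scalar recursions a_(k+1) = z a_k + b_k with
   |z| < 1 and b_k -> 0.  Hence |v A^N| <= |v|/2 for some N, and
   Nm v = sum_(k<N) |v A^k| is an equivalent norm in which A contracts.  With the C^1
   estimate of the remainder of f, small Nm-balls around p are invariant, and
   attracting for parameter sequences that stay close to lam and converge to it.

   For r large the parameters Lam(r n), n <= -1, are close to lam_-, so the pullback
   solution stays near X_- up to time 0 and x_1 = f(x_0, Lam 0) is close to Z_1.  For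
   n >= 1 the parameters Lam(r n) are close to lam_+ and tend to it; as Z_1 lies in the
   basin of Y_+, the solution shadows the frozen orbit of Z_1 long enough to enter an
   attracting ball of Y_+. *)

From HB Require Import structures.
From mathcomp Require Import all_boot all_order all_algebra.
From mathcomp Require Import all_classical all_reals all_analysis.
From mathcomp Require Import complex.
From mathcomp Require Import ring lra.
Set Implicit Arguments. Unset Strict Implicit. Unset Printing Implicit Defensive.
Import Order.TTheory GRing.Theory Num.Theory.
Import numFieldNormedType.Exports.
Local Open Scope classical_set_scope.
Local Open Scope ring_scope.

Section MatrixNorm.
Variable R : realType.

Lemma mx_entry_le_norm p q (M : 'M[R]_(p, q)) i j : `|M i j| <= `|M|.
Proof. by rewrite [`|M|]mx_normrE; apply/bigmax_geP; right; exists (i, j). Qed.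

Lemma mx_norm_le_entries p q (M : 'M[R]_(p, q)) e :
  0 <= e -> (forall i j, `|M i j| <= e) -> `|M| <= e.
Proof.
by move=> e0 Me; rewrite [`|M|]mx_normrE; apply/bigmax_leP; split=> // -[i j] _.
Qed.

Lemma mx_norm_mulmx_le k p q (A : 'M[R]_(k, p)) (B : 'M[R]_(p, q)) :
  `|A *m B| <= p%:R * `|A| * `|B|.
Proof.
apply: mx_norm_le_entries => [|i j]; first by rewrite -mulrA mulr_ge0.
rewrite mxE; apply: le_trans (ler_norm_sum _ _ _) _.
have -> : p%:R * `|A| * `|B| = \sum_(l < p) `|A| * `|B|.
  by rewrite sumr_const card_ord -mulrA mulr_natl.
apply: ler_sum => l _.
by rewrite normrM ler_pM ?mx_entry_le_norm.
Qed.

Lemma mx_norm_row_mx_le p q1 q2 (A : 'M[R]_(p, q1)) (B : 'M[R]_(p, q2)) e :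
  `|A| <= e -> `|B| <= e -> `|row_mx A B| <= e.
Proof.
move=> Ae Be; apply: mx_norm_le_entries => [|i j]; first exact: le_trans Ae.
rewrite mxE; case: splitP => k _.
  exact: le_trans (mx_entry_le_norm A _ _) Ae.
exact: le_trans (mx_entry_le_norm B _ _) Be.
Qed.

Lemma mulmxr_continuous k p q (P : 'M[R]_(p, q)) :
  continuous (mulmxr P : 'M[R]_(k, p) -> 'M[R]_(k, q)).
Proof.
apply/bounded_linear_continuous/linear_boundedP; near=> c => v /=.
apply: le_trans (mx_norm_mulmx_le _ _) _; rewrite mulrAC.
apply: ler_wpM2r; first exact: normr_ge0.
by near: c; apply: nbhs_pinfty_ge; rewrite realE mulr_ge0.
Unshelve. all: by end_near. Qed.

End MatrixNorm.

Lemma contracting_recursion_cvg0 (R : realType) (c : R) (d b : nat -> R) :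
  0 <= c -> c < 1 -> (forall k, 0 <= d k) -> (forall k, d k.+1 <= c * d k + b k) ->
  b @ \oo --> 0 -> d @ \oo --> 0.
Proof.
move=> c_ge0 c_lt1 d_ge0 dS /cvgr0Pnorm_le b_lim; apply/cvgr0Pnorm_le => e e_gt0.
have be_gt0 : 0 < (1 - c) * e / 2 by rewrite divr_gt0 ?mulr_gt0 ?subr_gt0.
have [K _ bK] := b_lim _ be_gt0.
have dK j : d (K + j)%N <= c ^+ j * d K + e / 2.
  elim: j => [|j IH]; first by rewrite addn0 expr0 mul1r; lra.
  rewrite addnS; apply: le_trans (dS _) _.
  have := ler_wpM2l c_ge0 IH; have := ler_norm (b (K + j)%N).
  have := bK (K + j)%N (leq_addr _ _); rewrite exprS mulrDr mulrA; lra.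
have c_norm_lt1 : `|c| < 1 by rewrite ger0_norm.
have /cvgr0Pnorm_le /(_ (e / 2)) [|J _ cJ] := cvg_geometric (d K) c_norm_lt1.
  by rewrite divr_gt0.
exists (K + J)%N => // k /= Kk; rewrite ger0_norm //.
rewrite -(subnKC (leq_trans (leq_addr J K) Kk)); apply: le_trans (dK _) _.
have Jk : (J <= k - K)%N by rewrite leq_subRL ?(leq_trans (leq_addr J K)).
by have := cJ _ Jk; rewrite /geometric /= mulrC ler_norml => /andP[_]; lra.
Qed.

Section LimitsAtInfinity.
Variables (R : realType) (V : normedModType R) (g : R -> V) (a : V).

Lemma cvg_pinfty_dist_le e : g s @[s --> +oo] --> a -> 0 < e ->
  exists2 M, 0 < M & forall s, M <= s -> `|g s - a| <= e.
Proof.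
move=> /cvgrPdist_le g_lim e_gt0; have [M [_ gM]] := g_lim e e_gt0.
exists (`|M| + 1) => [|s Ms]; first by have := normr_ge0 M; lra.
by rewrite distrC; apply: gM; have := ler_norm M; lra.
Qed.

Lemma cvg_ninfty_dist_le e : g s @[s --> -oo] --> a -> 0 < e ->
  exists2 M, 0 < M & forall s, s <= - M -> `|g s - a| <= e.
Proof.
move=> /cvgrPdist_le g_lim e_gt0; have [M [_ gM]] := g_lim e e_gt0.
exists (`|M| + 1) => [|s sM]; first by have := normr_ge0 M; lra.
by rewrite distrC; apply: gM; have := ler_norm (- M); rewrite normrN; lra.
Qed.

Lemma cvg_at_arithmetic r : 0 < r -> g s @[s --> +oo] --> a ->
  (fun k => g (r * k.+1%:R)) @ \oo --> a.
Proof.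
move=> r_gt0 g_lim; apply: cvg_comp g_lim.
rewrite (_ : (fun k => _) = arithmetic r r); first exact: cvg_arithmetic.
by apply/funext => k; rewrite /arithmetic /= mulr_natr mulrS.
Qed.

End LimitsAtInfinity.

Section SpectralRadius.
Variable R : realType.
Local Notation normc := (@Normc.normc R).

Lemma normc_ge0 (z : R[i]) : 0 <= normc z.
Proof. exact: (@normr_ge0 _ (Rcomplex R)). Qed.

Lemma normc_real (a : R) : normc (a%:C)%C = `|a|.
Proof. by rewrite /Normc.normc /= expr0n /= addr0 sqrtr_sqr. Qed.

Lemma normc_linear_recursion_cvg0 (z : R[i]) (a b : nat -> R[i]) :
  normc z < 1 -> (forall k, a k.+1 = z * a k + b k) ->
  (fun k => normc (b k)) @ \oo --> 0 -> (fun k => normc (a k)) @ \oo --> 0.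
Proof.
move=> z_lt1 aS; apply: contracting_recursion_cvg0 z_lt1 _ _ => [|k|k].
- exact: normc_ge0.
- exact: normc_ge0.
- by rewrite aS -Normc.normcM; apply: le_normcD.
Qed.

Lemma horner_mx_prod_XsubC_expr_cvg0 n (B : 'M[R[i]]_n.+1) (s : seq R[i])
    (W : 'M[R[i]]_n.+1) :
  (forall z, z \in s -> normc z < 1) ->
  horner_mx B (\prod_(z <- s) ('X - z%:P)) *m W = 0 ->
  forall i j, (fun k => normc ((B ^+ k *m W) i j)) @ \oo --> 0.
Proof.
elim: s W => [|z s IH] W s_lt1 BW0 i j.
  move: BW0; rewrite big_nil rmorph1 mul1mx => ->.
  rewrite (_ : (fun k => _) = fun=> 0); first exact: cvg_cst.
  by apply/funext => k; rewrite mulmx0 mxE Normc.normc0.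
pose W' := (B - z%:M) *m W.
have hz : horner_mx B ('X - z%:P) = B - z%:M.
  by rewrite rmorphB /= horner_mx_X horner_mx_C.
have BW'0 : horner_mx B (\prod_(w <- s) ('X - w%:P)) *m W' = 0.
  rewrite /W' mulmxA -hz mulmxE -rmorphM mulrC.
  by rewrite big_cons in BW0.
apply: (normc_linear_recursion_cvg0 (b := fun k => (B ^+ k *m W') i j)).
- exact: s_lt1 (mem_head _ _).
- move=> k /=; have BkS : B ^+ k.+1 = B ^+ k *m B by rewrite exprSr.
  rewrite /W' mulmxA mulmxBr mulmxBl -BkS mul_mx_scalar -scalemxAl !mxE.
  by rewrite [RHS]addrC subrK.
- by apply: IH BW'0 _ _ => w ws; apply: s_lt1; rewrite inE ws orbT.
Qed.

Lemma spectral_radius_lt1_expr_cvg0 n (A : 'M[R]_n.+1) :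
  spectral_radius_lt1 A -> (fun k => A ^+ k) @ \oo --> (0 : 'M[R]_n.+1).
Proof.
move=> A_lt1; pose B := map_mx (real_complex R) A.
have [rs B_split] := closed_field_poly_normal (char_poly B).
rewrite (monicP (char_poly_monic B)) scale1r in B_split.
have rs_lt1 z : z \in rs -> normc z < 1.
  move=> z_rs; rewrite -ltcR; apply: A_lt1.
  by rewrite /eigenvalueC (map_char_poly (real_complex R)) B_split root_prod_XsubC.
have CH : horner_mx B (\prod_(z <- rs) ('X - z%:P)) *m 1 = 0.
  by rewrite mulmx1 -B_split Cayley_Hamilton.
apply/cvgr0Pnorm_le => e e0.
have entry (ij : 'I_n.+1 * 'I_n.+1) : \forall k \near \oo, `|(A ^+ k) ij.1 ij.2| <= e.
  have /cvgr0Pnorm_le /(_ e e0) := horner_mx_prod_XsubC_expr_cvg0 rs_lt1 CH ij.1 ij.2.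
  by apply: filterS => k; rewrite mulmx1 -rmorphXn mxE normc_real normr_id.
apply: filterS (filter_forall _ entry) => k Ak.
by apply: mx_norm_le_entries => [|i j]; [exact: ltW | exact: Ak (i, j)].
Qed.

Lemma spectral_radius_lt1_expr_half n (A : 'M[R]_n.+1) :
  spectral_radius_lt1 A ->
  exists2 N, (0 < N)%N & forall v : 'rV[R]_n.+1, `|v *m A ^+ N| <= `|v| / 2.
Proof.
move=> /spectral_radius_lt1_expr_cvg0 /cvgr0Pnorm_le Ak0.
have e_gt0 : 0 < (2 * n.+1%:R)^-1 :> R by rewrite invr_gt0 mulr_gt0.
have [N _ AN] := Ak0 _ e_gt0; exists N.+1 => // v.
apply: le_trans (mx_norm_mulmx_le _ _) _.
have -> : `|v| / 2 = n.+1%:R * `|v| * (2 * n.+1%:R)^-1.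
  by field; rewrite nat1r pnatr_eq0.
by apply: ler_wpM2l; [rewrite mulr_ge0 | apply: AN => /=].
Qed.

End SpectralRadius.

Section AdaptedNorm.
Variables (R : realType) (n : nat) (A : 'M[R]_n.+1) (N : nat).
Hypothesis N_gt0 : (0 < N)%N.
Hypothesis AN_half : forall v : 'rV[R]_n.+1, `|v *m A ^+ N| <= `|v| / 2.

Definition adapted_norm (v : 'rV[R]_n.+1) : R := \sum_(k < N) `|v *m A ^+ k|.

Definition adapted_norm_const : R := 1 + \sum_(k < N) n.+1%:R * `|A ^+ k|.

Definition adapted_rate : R := 1 - (2 * adapted_norm_const)^-1.

Lemma adapted_norm_const_ge1 : 1 <= adapted_norm_const.
Proof. by rewrite lerDl sumr_ge0 // => k _; rewrite mulr_ge0. Qed.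

Lemma adapted_norm_const_gt0 : 0 < adapted_norm_const.
Proof. by have := adapted_norm_const_ge1; lra. Qed.

Lemma adapted_rate_ge0 : 0 <= adapted_rate.
Proof.
rewrite subr_ge0 invf_le1 ?mulr_gt0 ?adapted_norm_const_gt0 //.
by have := adapted_norm_const_ge1; lra.
Qed.

Lemma adapted_rate_lt1 : adapted_rate < 1.
Proof. by rewrite gtrBl invr_gt0 mulr_gt0 ?adapted_norm_const_gt0. Qed.

Lemma adapted_norm_ge0 v : 0 <= adapted_norm v.
Proof. exact: sumr_ge0. Qed.

Lemma normr_le_adapted_norm v : `|v| <= adapted_norm v.
Proof.
rewrite /adapted_norm -(prednK N_gt0) big_ord_recl expr0 mulmx1 lerDl.
exact: sumr_ge0.
Qed.

Lemma adapted_norm_le v : adapted_norm v <= adapted_norm_const * `|v|.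
Proof.
rewrite mulrDl mul1r -[adapted_norm v]add0r lerD // mulr_suml.
apply: ler_sum => k _; apply: le_trans (mx_norm_mulmx_le _ _) _.
by rewrite mulrAC.
Qed.

Lemma adapted_normD_le u v : adapted_norm (u + v) <= adapted_norm u + adapted_norm v.
Proof.
rewrite /adapted_norm -big_split /=; apply: ler_sum => k _.
by rewrite mulmxDl ler_normD.
Qed.

Lemma adapted_norm_mulmx_le v : adapted_norm (v *m A) <= adapted_rate * adapted_norm v.
Proof.
have telescope : adapted_norm (v *m A) + `|v| = adapted_norm v + `|v *m A ^+ N|.
  rewrite /adapted_norm; under eq_bigr do rewrite -mulmxA mulmxE -exprS.
  transitivity (\sum_(k < N.+1) `|v *m A ^+ k|).
    by rewrite big_ord_recl expr0 mulmx1 addrC.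
  by rewrite big_ord_recr.
move: telescope; have := AN_half v; have := adapted_norm_le v.
have := adapted_norm_const_gt0; rewrite /adapted_rate mulrBl mul1r.
set C := adapted_norm_const; set Nv := adapted_norm v => C_gt0 NvC.
have : Nv / C <= `|v| by rewrite ler_pdivrMr // mulrC.
have -> : (2 * C)^-1 * Nv = Nv / C / 2 by field; exact: lt0r_neq0.
lra.
Qed.

End AdaptedNorm.

Section JacobianMVT.
Variables (R : realType) (p q : nat) (g : 'rV[R]_p -> 'rV[R]_q).
Hypothesis g_diff : forall z, differentiable g z.

Lemma jacobian_mvt_coord z c i : exists2 xi : R, xi \in `]0, 1[ &
  (g (z + c) - g z) 0 i = (c *m jacobian g (z + xi *: c)) 0 i.
Proof.
pose G t := g (z + t *: c).
have G_diff t : is_diff t G ('d g (z + t *: c) \o ( *:%R^~ c)).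
  have seg_diff : is_diff t (fun s : R => z + s *: c) ( *:%R^~ c).
    have : is_diff t (cst z + *:%R^~ c) (0 + *:%R^~ c) by apply: is_diffD.
    by move/is_diff_eq; apply; rewrite add0r.
  exact: is_diff_comp seg_diff (differentiableP (g_diff _)).
have G_derivable t : derivable G t 1 by apply: diff_derivable; exact: ex_diff.
have DG t : 'D_1 G t = c *m jacobian g (z + t *: c).
  by rewrite deriveE ?diff_val //= ?scale1r /jacobian ?mul_rV_lin1 //; exact: ex_diff.
have phi_derive (t : R) :
    is_derive t (1 : R) (fun s => G s 0 i) ((c *m jacobian g (z + t *: c)) 0 i).
  have -> : (c *m jacobian g (z + t *: c)) 0 i = 'D_1 (fun s => G s 0 i) t.
    by rewrite -DG derive_mx // mxE.
  exact/derivableP/(derivable_mxP G t 1).1.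
have [xi xi01 E] := MVT ltr01 (fun t _ => phi_derive t)
  (derivable_within_continuous (fun t _ => @ex_derive _ _ _ _ _ _ _ (phi_derive t))).
by exists xi => //; move: E; rewrite /G scale1r scale0r addr0 subr0 mulr1 !mxE.
Qed.

Hypothesis jacobian_cont : continuous (jacobian g).

Lemma jacobian_linear_approx z0 eta : 0 < eta -> exists2 d, 0 < d &
  forall z w, `|z - z0| <= d -> `|w - z0| <= d ->
  `|g w - g z - (w - z) *m jacobian g z0| <= eta * `|w - z|.
Proof.
move=> eta_gt0; pose eps := eta / (p%:R + 1).
have eps_gt0 : 0 < eps by rewrite divr_gt0 // ltr_wpDl.
have peps : p%:R * eps = eta - eps by rewrite /eps; field; rewrite lt0r_neq0 ?ltr_wpDl.
have /cvgrPdist_lt /(_ eps eps_gt0) /nbhs_normP [d /= d_gt0 Jd] := @jacobian_cont z0.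
exists (d / 4) => [|z w zd wd]; first by rewrite divr_gt0.
have wz : `|w - z| <= d / 2.
  by apply: le_trans (ler_distD z0 _ _) _; rewrite distrC in zd; lra.
apply: mx_norm_le_entries => [|i j]; first exact: mulr_ge0 (ltW eta_gt0) _.
have [xi /andP[xi_gt0 xi_lt1] E] := jacobian_mvt_coord z (w - z) j.
rewrite [z + _]addrC subrK in E.
have J_near : `|jacobian g (z + xi *: (w - z)) - jacobian g z0| <= eps.
  rewrite distrC; apply/ltW/Jd => /=.
  rewrite opprD addrA; apply: le_lt_trans (ler_normB _ _) _.
  rewrite normrZ gtr0_norm // distrC.
  have : xi * `|w - z| <= `|w - z| by rewrite ler_piMl // ltW.
  move/le_trans/(_ wz) => xi_wz; apply: le_lt_trans (lerD zd xi_wz) _; lra.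
have -> : (g w - g z - (w - z) *m jacobian g z0) i j =
    ((w - z) *m (jacobian g (z + xi *: (w - z)) - jacobian g z0)) 0 j.
  by rewrite (ord1 i) mulmxBr [RHS]mxE -E [LHS]mxE.
apply: le_trans (mx_entry_le_norm _ 0 j) _; apply: le_trans (mx_norm_mulmx_le _ _) _.
rewrite mulrAC; apply: ler_wpM2r => //.
apply: le_trans (ler_wpM2l (ler0n _ _) J_near) _; lra.
Qed.

End JacobianMVT.

Section PartialJacobian.
Variables (R : realType) (l m : nat) (f : 'rV[R]_l -> 'rV[R]_m -> 'rV[R]_l).
Hypothesis f_diff : forall z, differentiable (uncurry_f f) z.

Lemma uncurry_f_row_mx x lam : uncurry_f f (row_mx x lam) = f x lam.
Proof. by rewrite /uncurry_f row_mxKl row_mxKr. Qed.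

Lemma f_continuous_at x0 lam0 e : 0 < e -> exists2 d, 0 < d &
  forall x lam, `|x - x0| <= d -> `|lam - lam0| <= d -> `|f x lam - f x0 lam0| < e.
Proof.
move=> e_gt0; have := differentiable_continuous (f_diff (row_mx x0 lam0)).
move=> /cvgrPdist_lt /(_ e e_gt0) /nbhs_normP [d /= d_gt0 fd].
exists (d / 2) => [|x lam xd lamd]; first by rewrite divr_gt0.
rewrite distrC -!uncurry_f_row_mx; apply: fd => /=.
rewrite opp_row_mx add_row_mx; apply: le_lt_trans (_ : d / 2 < d); last by lra.
by apply: mx_norm_row_mx_le; rewrite distrC.
Qed.

Lemma orbit_tracking lam1 z j e : 0 < e -> exists2 eta, 0 < eta &
  forall (y : nat -> 'rV[R]_l) (mu : nat -> 'rV[R]_m), `|y 0%N - z| <= eta ->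
  (forall i, y i.+1 = f (y i) (mu i)) ->
  (forall i, (i < j)%N -> `|mu i - lam1| <= eta) ->
  `|y j - iter j (f^~ lam1) z| <= e.
Proof.
elim: j e => [|j IH] e e_gt0; first by exists e => // y mu.
have [d d_gt0 fd] := f_continuous_at (iter j (f^~ lam1) z) lam1 e_gt0.
have [eta eta_gt0 track] := IH d d_gt0.
exists (Num.min eta d) => [|y mu y0 yS mu_le]; first by rewrite lt_min eta_gt0.
have min_le a : a <= Num.min eta d -> a <= eta /\ a <= d.
  by move=> a_le; apply/andP; rewrite -le_min.
rewrite yS iterS; apply/ltW/fd; last exact: (min_le _ (mu_le j (ltnSn j))).2.
apply: track yS _ => [|i ij]; first exact: (min_le _ y0).1.
exact: (min_le _ (mu_le i (ltnW ij))).1.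
Qed.

Lemma Dxf_row_mx x lam (v : 'rV[R]_l) :
  v *m Dxf f x lam = row_mx v 0 *m jacobian (uncurry_f f) (row_mx x lam).
Proof.
pose P : 'M[R]_(l, l + m) := row_mx (1%:M : 'M[R]_l) 0.
have PE (y : 'rV[R]_l) : y *m P = row_mx y 0 by rewrite mul_mx_row mulmx1 mulmx0.
pose emb (y : 'rV[R]_l) := y *m P + row_mx 0 lam.
have embE (y : 'rV[R]_l) : emb y = row_mx y lam by rewrite /emb PE add_row_mx addr0 add0r.
have emb_diff : is_diff x emb (mulmxr P : 'rV[R]_l -> _).
  have P_diff : is_diff x (mulmxr P : 'rV[R]_l -> _) (mulmxr P).
    have P_cont := @mulmxr_continuous R 1 _ _ P.
    by apply: DiffDef; [exact: linear_differentiable _ P_cont | exact: diff_lin _ P_cont].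
  have : is_diff x (mulmxr P + cst (row_mx 0 lam)) (mulmxr P + 0) by apply: is_diffD.
  by move/is_diff_eq; apply; rewrite addr0.
have fE : (fun y => f y lam) = uncurry_f f \o emb.
  by apply/funext => y /=; rewrite embE uncurry_f_row_mx.
have := is_diff_comp emb_diff (differentiableP (f_diff (emb x))).
rewrite /Dxf fE /jacobian => f_is_diff.
by rewrite mul_rV_lin1 diff_val /= mul_rV_lin1 PE embE.
Qed.

Hypothesis jacobian_cont : continuous (jacobian (uncurry_f f)).

Lemma f_linear_approx x0 lam0 eta : 0 < eta -> exists2 d, 0 < d &
  forall x lam, `|x - x0| <= d -> `|lam - lam0| <= d ->
  `|f x lam - f x0 lam - (x - x0) *m Dxf f x0 lam0| <= eta * `|x - x0|.
Proof.
move=> eta_gt0.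
have [d d_gt0 approx] :=
  jacobian_linear_approx f_diff jacobian_cont (row_mx x0 lam0) eta_gt0.
exists d => // x lam xd lamd.
have := approx (row_mx x0 lam) (row_mx x lam).
rewrite !opp_row_mx !add_row_mx !subrr !uncurry_f_row_mx -Dxf_row_mx.
have zero_d : `|0 : 'rV[R]_l| <= d by rewrite normr0 ltW.
move=> /(_ (mx_norm_row_mx_le zero_d lamd) (mx_norm_row_mx_le xd lamd)).
move/le_trans; apply; apply: ler_wpM2l; first exact: ltW.
by apply: mx_norm_row_mx_le; rewrite ?normr0.
Qed.

End PartialJacobian.

Section LocalDynamics.
Variables (R : realType) (n m : nat) (f : 'rV[R]_n.+1 -> 'rV[R]_m -> 'rV[R]_n.+1).
Hypothesis f_diff : forall z, differentiable (uncurry_f f) z.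
Hypothesis jacobian_cont : continuous (jacobian (uncurry_f f)).
Variables (p : 'rV[R]_n.+1) (lam0 : 'rV[R]_m) (N : nat).
Hypothesis fp : f p lam0 = p.
Hypothesis N_gt0 : (0 < N)%N.
Hypothesis DN_half : forall v : 'rV[R]_n.+1, `|v *m Dxf f p lam0 ^+ N| <= `|v| / 2.

Local Notation Nm := (adapted_norm (Dxf f p lam0) N).
Local Notation C := (adapted_norm_const (Dxf f p lam0) N).
(* Half of the margin 1 - adapted_rate absorbs the nonlinear remainder of f. *)
Let rate := (1 + adapted_rate (Dxf f p lam0) N) / 2.

Let rate_ge0 : 0 <= rate.
Proof. by have := adapted_rate_ge0 (Dxf f p lam0) N; rewrite /rate; lra. Qed.

Let rate_lt1 : rate < 1.
Proof. by have := adapted_rate_lt1 (Dxf f p lam0) N; rewrite /rate; lra. Qed.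

Lemma f_adapted_contraction : exists2 dl, 0 < dl & forall x lam,
  Nm (x - p) <= dl -> `|lam - lam0| <= dl ->
  Nm (f x lam - p) <= rate * Nm (x - p) + Nm (f p lam - p).
Proof.
pose A := Dxf f p lam0.
have C_gt0 : 0 < C := adapted_norm_const_gt0 A N.
have th_lt1 : adapted_rate A N < 1 := adapted_rate_lt1 A N.
pose eta := (1 - adapted_rate A N) / (2 * C).
have eta_gt0 : 0 < eta by rewrite divr_gt0 ?subr_gt0 ?mulr_gt0.
have [d d_gt0 approx] := f_linear_approx f_diff jacobian_cont p lam0 eta_gt0.
exists d => // x lam xd lamd.
set r := f x lam - f p lam - (x - p) *m A.
have -> : f x lam - p = (x - p) *m A + r + (f p lam - p).
  by rewrite /r [_ *m A + _]addrC subrK addrA subrK.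
have r_le : Nm r <= C * eta * Nm (x - p).
  apply: le_trans (adapted_norm_le _ _ _) _; rewrite -mulrA.
  apply: ler_wpM2l; first exact: ltW.
  apply: le_trans (approx x lam _ lamd) _.
    exact: le_trans (normr_le_adapted_norm _ N_gt0 _) xd.
  by apply: ler_wpM2l; [exact: ltW | exact: normr_le_adapted_norm].
have CetaE : C * eta = (1 - adapted_rate A N) / 2.
  by rewrite /eta; field; exact: lt0r_neq0.
apply: le_trans (adapted_normD_le _ _ _ _) _; rewrite lerD2r.
apply: le_trans (adapted_normD_le _ _ _ _) _.
have -> : rate * Nm (x - p) = adapted_rate A N * Nm (x - p) + C * eta * Nm (x - p).
  by rewrite CetaE /rate /A; field.
exact: lerD (adapted_norm_mulmx_le DN_half _) r_le.
Qed.

Lemma fixed_point_drift_small e : 0 < e -> exists2 g, 0 < g &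
  forall lam, `|lam - lam0| <= g -> Nm (f p lam - p) <= e.
Proof.
move=> e_gt0; have C_gt0 : 0 < C := adapted_norm_const_gt0 _ N.
have [d d_gt0 fd] := f_continuous_at f_diff p lam0 (divr_gt0 e_gt0 C_gt0).
exists d => // lam lamd; apply: le_trans (adapted_norm_le _ _ _) _.
rewrite mulrC -ler_pdivlMr //.
by have := fd p lam; rewrite subrr normr0 fp => /(_ (ltW d_gt0) lamd) /ltW.
Qed.

Section Contraction.
Variable dl : R.
Hypothesis dl_gt0 : 0 < dl.
Hypothesis f_contract : forall x lam,
  Nm (x - p) <= dl -> `|lam - lam0| <= dl ->
  Nm (f x lam - p) <= rate * Nm (x - p) + Nm (f p lam - p).

Lemma adapted_ball_invariant eps : 0 < eps -> eps <= dl -> exists2 g, 0 < g &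
  forall x lam, Nm (x - p) <= eps -> `|lam - lam0| <= g -> Nm (f x lam - p) <= eps.
Proof.
move=> eps_gt0 eps_dl.
have e_gt0 : 0 < (1 - rate) * eps by rewrite mulr_gt0 // subr_gt0.
have [g g_gt0 fp_small] := fixed_point_drift_small e_gt0.
exists (Num.min g dl) => [|x lam xeps]; first by rewrite lt_min g_gt0.
rewrite le_min => /andP[lamg lamdl].
apply: le_trans (f_contract (le_trans xeps eps_dl) lamdl) _.
have := fp_small _ lamg; have := ler_wpM2l rate_ge0 xeps; lra.
Qed.

Lemma local_stability eps : 0 < eps ->
  exists2 delta, 0 < delta & exists2 g, 0 < g &
  forall (y : nat -> 'rV[R]_n.+1) (mu : nat -> 'rV[R]_m) k,
  `|y 0%N - p| <= delta -> (forall i, y i.+1 = f (y i) (mu i)) ->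
  (forall i, (i < k)%N -> `|mu i - lam0| <= g) -> `|y k - p| <= eps.
Proof.
move=> eps_gt0; pose eps' := Num.min eps dl.
have eps'_gt0 : 0 < eps' by rewrite lt_min eps_gt0.
have C_gt0 : 0 < C := adapted_norm_const_gt0 _ N.
have eps'_dl : eps' <= dl by rewrite ge_min lexx orbT.
have [g g_gt0 inv] := adapted_ball_invariant eps'_gt0 eps'_dl.
exists (eps' / C); first by rewrite divr_gt0.
exists g => // y mu k y0 yS mu_g.
have Nyk : Nm (y k - p) <= eps'.
  elim: k mu_g => [|k IH] mu_g.
    by apply: le_trans (adapted_norm_le _ _ _) _; rewrite mulrC -ler_pdivlMr.
  rewrite yS; apply: inv; last exact: mu_g (ltnSn k).
  by apply: IH => i ik; apply: mu_g; exact: ltnW.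
apply: le_trans (normr_le_adapted_norm _ N_gt0 _) (le_trans Nyk _).
by rewrite ge_min lexx.
Qed.

Lemma local_convergence : exists2 delta, 0 < delta & exists2 g, 0 < g &
  forall (y : nat -> 'rV[R]_n.+1) (mu : nat -> 'rV[R]_m),
  `|y 0%N - p| <= delta -> (forall i, y i.+1 = f (y i) (mu i)) ->
  (forall i, `|mu i - lam0| <= g) -> mu @ \oo --> lam0 -> y @ \oo --> p.
Proof.
have C_gt0 : 0 < C := adapted_norm_const_gt0 _ N.
have [g g_gt0 inv] := adapted_ball_invariant dl_gt0 (lexx dl).
exists (dl / C); first by rewrite divr_gt0.
exists (Num.min g dl) => [|y mu y0 yS mu_g mu_lim]; first by rewrite lt_min g_gt0.
have mu_le k : `|mu k - lam0| <= g /\ `|mu k - lam0| <= dl.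
  by apply/andP; rewrite -le_min.
have y_ball k : Nm (y k - p) <= dl.
  elim: k => [|k IH]; last by rewrite yS; apply: inv IH (mu_le k).1.
  by apply: le_trans (adapted_norm_le _ _ _) _; rewrite mulrC -ler_pdivlMr.
have fp_lim : (fun k => Nm (f p (mu k) - p)) @ \oo --> 0.
  apply/cvgr0Pnorm_le => e e_gt0.
  have [g' g'_gt0 fp_small] := fixed_point_drift_small e_gt0.
  move/cvgrPdist_le: mu_lim => /(_ g' g'_gt0); apply: filterS => k mu_k.
  by rewrite ger0_norm ?adapted_norm_ge0 // fp_small // distrC.
have Ny_lim : (fun k => Nm (y k - p)) @ \oo --> 0.
  apply: contracting_recursion_cvg0 rate_ge0 rate_lt1 _ _ fp_lim => k.
    exact: adapted_norm_ge0.
  by rewrite yS; apply: f_contract (y_ball k) (mu_le k).2.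
apply/cvgrPdist_le => e e_gt0; move/cvgr0Pnorm_le: Ny_lim => /(_ e e_gt0).
apply: filterS => k; rewrite distrC ger0_norm ?adapted_norm_ge0 //.
exact: le_trans (normr_le_adapted_norm _ N_gt0 _).
Qed.

End Contraction.

End LocalDynamics.

Lemma basin_of_image (R : realType) l m (f : 'rV[R]_l -> 'rV[R]_m -> 'rV[R]_l) p lam x :
  basin f p lam (f x lam) -> basin f p lam x.
Proof.
move=> Fx; change ((fun k => iter k (f^~ lam) x) @ \oo --> p).
by rewrite -cvg_shiftS; under eq_fun do rewrite iterSr.
Qed.

Section Attraction.
Variables (R : realType) (n m : nat) (f : 'rV[R]_n.+1 -> 'rV[R]_m -> 'rV[R]_n.+1).
Hypothesis f_diff : forall z, differentiable (uncurry_f f) z.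
Hypothesis jacobian_cont : continuous (jacobian (uncurry_f f)).

Lemma attracting_fixed_point_stable p lam0 eps :
  attracting_fixed_point f p lam0 -> 0 < eps ->
  exists2 delta, 0 < delta & exists2 g, 0 < g &
  forall (y : nat -> 'rV[R]_n.+1) (mu : nat -> 'rV[R]_m) k,
  `|y 0%N - p| <= delta -> (forall i, y i.+1 = f (y i) (mu i)) ->
  (forall i, (i < k)%N -> `|mu i - lam0| <= g) -> `|y k - p| <= eps.
Proof.
move=> [fp /spectral_radius_lt1_expr_half [N N_gt0 DN_half]] eps_gt0.
have [dl dl_gt0 contract] := f_adapted_contraction f_diff jacobian_cont N_gt0 DN_half.
exact (local_stability f_diff fp N_gt0 dl_gt0 contract eps_gt0).
Qed.

Lemma attracting_fixed_point_attracts p lam0 :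
  attracting_fixed_point f p lam0 ->
  exists2 delta, 0 < delta & exists2 g, 0 < g &
  forall (y : nat -> 'rV[R]_n.+1) (mu : nat -> 'rV[R]_m),
  `|y 0%N - p| <= delta -> (forall i, y i.+1 = f (y i) (mu i)) ->
  (forall i, `|mu i - lam0| <= g) -> mu @ \oo --> lam0 -> y @ \oo --> p.
Proof.
move=> [fp /spectral_radius_lt1_expr_half [N N_gt0 DN_half]].
have [dl dl_gt0 contract] := f_adapted_contraction f_diff jacobian_cont N_gt0 DN_half.
exact (local_convergence f_diff fp N_gt0 dl_gt0 contract).
Qed.

Lemma basin_robust Y lam1 z :
  attracting_fixed_point f Y lam1 -> basin f Y lam1 z ->
  exists2 eta, 0 < eta & forall (y : nat -> 'rV[R]_n.+1) (mu : nat -> 'rV[R]_m),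
  `|y 0%N - z| <= eta -> (forall i, y i.+1 = f (y i) (mu i)) ->
  (forall i, `|mu i - lam1| <= eta) -> mu @ \oo --> lam1 -> y @ \oo --> Y.
Proof.
move=> /attracting_fixed_point_attracts [delta delta_gt0 [g g_gt0 attract]] z_basin.
have half_gt0 : 0 < delta / 2 by rewrite divr_gt0.
have /cvgrPdist_le /(_ _ half_gt0) [J _ zJ] := z_basin.
have [eta eta_gt0 track] := orbit_tracking f_diff lam1 z J half_gt0.
exists (Num.min eta g) => [|y mu y0 yS mu_le mu_lim]; first by rewrite lt_min eta_gt0.
have min_le a : a <= Num.min eta g -> a <= eta /\ a <= g.
  by move=> a_le; apply/andP; rewrite -le_min.
rewrite -(cvg_shiftn J); apply: (attract _ (fun i => mu (i + J)%N)) => /= [|i|i|].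
- have yJ := track y mu (min_le _ y0).1 yS (fun i _ => (min_le _ (mu_le i)).1).
  have := zJ J (leqnn J); rewrite distrC add0n => zJY.
  apply: le_trans (ler_distD (iter J (f^~ lam1) z) _ _) _.
  by apply: le_trans (lerD yJ zJY) _; lra.
- by rewrite addSn yS.
- exact: (min_le _ (mu_le _)).2.
- by rewrite (cvg_shiftn J (fun i => mu i)).
Qed.

Lemma pullback_solution_natS Lam X_m r x k : pullback_solution f Lam r X_m x ->
  x k.+1%:Z = f (x k%:Z) (Lam (r * k%:R)).
Proof. by move=> [xS _]; rewrite -xS -[k.+1]addn1 PoszD. Qed.

Lemma pullback_solution_at0_near Lam lam_m X_m eps :
  attracting_fixed_point f X_m lam_m -> Lam s @[s --> -oo] --> lam_m -> 0 < eps ->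
  exists2 M, 0 < M & forall r x, M <= r -> pullback_solution f Lam r X_m x ->
  `|x 0 - X_m| <= eps.
Proof.
move=> Xm_attr Lam_lim eps_gt0.
have [delta delta_gt0 [g g_gt0 stable]] :=
  attracting_fixed_point_stable Xm_attr eps_gt0.
have [M M_gt0 LamM] := cvg_ninfty_dist_le Lam_lim g_gt0.
exists M => // r x rM [xS x_lim].
have /cvgrPdist_le /(_ delta delta_gt0) [K _ xK] := x_lim.
(* Restart the solution at time -K, where it is already delta-close to X_m. *)
have := stable (fun j => x (j%:Z - K%:Z)) (fun j => Lam (r * (j%:Z - K%:Z)%:~R)) K.
rewrite subrr; apply => [|j|j jK].
- by rewrite sub0r distrC; exact: (xK K (leqnn K)).
- by rewrite -xS addrAC -[j.+1]addn1 PoszD.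
- apply: LamM; rewrite intrB.
  have jK' : j%:R + 1 <= K%:R :> R by rewrite natr1 ler_nat.
  have : r * (j%:R - K%:R) <= r * -1 by apply: ler_wpM2l; lra.
  lra.
Qed.

End Attraction.

Lemma cvg_rV0 (R : realType) (u : nat -> 'rV[R]_0) (a : 'rV[R]_0) : u @ \oo --> a.
Proof.
by rewrite (_ : u = fun=> a); [exact: cvg_cst | apply/funext => k; apply/rowP => -[]].
Qed.

Theorem mainTheorem5 (R : realType) (l m : nat)
  (f : 'rV[R]_l -> 'rV[R]_m -> 'rV[R]_l)
  (Lam : R -> 'rV[R]_m) (lam_m lam_p : 'rV[R]_m)
  (X : R -> 'rV[R]_l) (X_m X_p : 'rV[R]_l) (Y_p : 'rV[R]_l) :
  C1_map f ->
  parameter_shift Lam lam_m lam_p ->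
  stable_path f Lam lam_m lam_p X X_m X_p ->
  attracting_fixed_point f Y_p lam_p ->
  basin f Y_p lam_p (f (f X_m (Lam 0)) lam_p) ->
  exists r1 : R, 0 < r1 /\
    forall r : R, r1 < r ->
    forall x : int -> 'rV[R]_l, pullback_solution f Lam r X_m x ->
      (fun k : nat => x (k%:Z)) @ \oo --> Y_p.
Proof.
case: l f X X_m X_p Y_p => [|n] f X X_m X_p Y_p.
  by exists 1; split=> // *; exact: cvg_rV0.
move=> [f_diff J_cont] [_ [_ [Lam_m [Lam_p _]]]].
move=> [_ [_ [_ [_ [fXm [_ [_ [Xm_stable _]]]]]]]] Yp_attr /basin_of_image Z1_basin.
have [eta eta_gt0 robust] := basin_robust f_diff J_cont Yp_attr Z1_basin.
have [d d_gt0 f_near] := f_continuous_at f_diff X_m (Lam 0) eta_gt0.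
have [M1 M1_gt0 x0_near] :=
  pullback_solution_at0_near f_diff J_cont (conj fXm Xm_stable) Lam_m d_gt0.
have [M2 M2_gt0 LamM2] := cvg_pinfty_dist_le Lam_p eta_gt0.
exists (M1 + M2); split=> [|r rM x x_sol]; first lra.
rewrite -cvg_shiftS; apply: (robust _ (fun k => Lam (r * k.+1%:R))) => /= [|k|k|].
- rewrite (pullback_solution_natS 0 x_sol) mulr0; apply/ltW/f_near.
    by apply: x0_near x_sol; lra.
  by rewrite subrr normr0 ltW.
- exact: pullback_solution_natS x_sol.
- apply: LamM2; apply: le_trans (ler_peMr _ _); rewrite ?ler1n //; lra.
- apply: cvg_at_arithmetic Lam_p; lra.
Qed.
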